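(* Let $a\in\mathbb{R}$ and $\gamma>0$, and assume \[ P=\tfrac12(1-\gamma^2a^2)+\sqrt{\gamma^2(-1+\gamma^2)+(\gamma^2a^2-1)^2/4}>1. \] Assume further the curvature condition $P>2\gamma-1$ and the strong negativity condition \[ (P+2\gamma^2-1)\left(P-1-2\sqrt{\gamma^2-P}\right)^2\ge (P-1)\left((P+1)^2-4\gamma^2\right). \] Then the closed-loop system of $x(t+1)=ax(t)+bu(t)+w(t)$, $x(0)=x_0$, $y(t)=x(t)+v(t)$ with unknown $b\in\{-1,1\}$, controlled by the certainty-equivalence dead-beat controller (defined in the context), has gain from $(w,v)$ to $x$ bounded above by $\gamma$; that is, for both $b\in\{-1,1\}$, all $T\ge 0$, all real sequences $w,v$ and all $x_0\in\mathbb{R}$, \[ \sum_{\tau=0}^{T+1}x(\tau)^2-\gamma^2\sum_{\tau=0}^{T}w(\tau)^2-\gamma^2\sum_{\tau=0}^{T+1}v(\tau)^2-Px(0)^2\le 0. \]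
   Context: Set $\hat a=\frac{aP}{P+\gamma^2-1}$ and $\hat g=\frac{\gamma^2a}{P+\gamma^2-1}$. For $i\in\{-1,1\}$ the controller runs observers $\hat x_i(t+1)=\hat a\hat x_i(t)+iu(t)+\hat gy(t)$, $\hat x_i(0)=0$, and cumulative costs $l_i(t+1)=l_i(t)-P\hat x_i(t)^2-\gamma^2y(t)^2+\frac{(P\hat x_i(t)+\gamma^2y(t))^2}{P+\gamma^2-1}$, $l_i(0)=0$ (note $l_i(t+1)$ depends only on $\hat x_i(t)$ and $y(t)$). The certainty-equivalence dead-beat controller is \[ u(t)=\begin{cases}-(\hat a\hat x_1(t)+\hat gy(t)) & \text{if } l_1(t+1)\ge l_{-1}(t+1),\\ \hat a\hat x_{-1}(t)+\hat gy(t) & \text{if } l_1(t+1)<l_{-1}(t+1).\end{cases} \] *)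

From Stdlib Require Import Reals.
Open Scope R_scope.

(* P as defined in the paper (Riccati solution). *)
Definition Pval (a gamma : R) : R :=
  /2 * (1 - gamma^2 * a^2)
  + sqrt (gamma^2 * (-1 + gamma^2) + (gamma^2 * a^2 - 1)^2 / 4).

Definition ahat (a gamma P : R) : R := a * P / (P + gamma^2 - 1).
Definition ghat (a gamma P : R) : R := gamma^2 * a / (P + gamma^2 - 1).

Definition lincr (gamma P xh y : R) : R :=
  - P * xh^2 - gamma^2 * y^2 + (P * xh + gamma^2 * y)^2 / (P + gamma^2 - 1).

(* Closed-loop state at time t:
   (x(t), xhat_1(t), xhat_{-1}(t), l_1(t), l_{-1}(t)). *)
Record cl_state := mkCL {
  cl_x : R; cl_xh1 : R; cl_xhm1 : R; cl_l1 : R; cl_lm1 : R }.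

Definition control (a gamma P : R) (s : cl_state) (y : R) : R :=
  let l1' := cl_l1 s + lincr gamma P (cl_xh1 s) y in
  let lm1' := cl_lm1 s + lincr gamma P (cl_xhm1 s) y in
  if Rle_dec lm1' l1'
  then - (ahat a gamma P * cl_xh1 s + ghat a gamma P * y)
  else ahat a gamma P * cl_xhm1 s + ghat a gamma P * y.

Definition cl_step (a b gamma P : R) (wt vt : R) (s : cl_state) : cl_state :=
  let y := cl_x s + vt in
  let u := control a gamma P s y in
  mkCL (a * cl_x s + b * u + wt)
       (ahat a gamma P * cl_xh1 s + 1 * u + ghat a gamma P * y)
       (ahat a gamma P * cl_xhm1 s + (-1) * u + ghat a gamma P * y)
       (cl_l1 s + lincr gamma P (cl_xh1 s) y)
       (cl_lm1 s + lincr gamma P (cl_xhm1 s) y).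

Fixpoint cl_traj (a b gamma P : R) (w v : nat -> R) (x0 : R) (t : nat)
  : cl_state :=
  match t with
  | O => mkCL x0 0 0 0 0
  | S n => cl_step a b gamma P (w n) (v n) (cl_traj a b gamma P w v x0 n)
  end.

Definition cl_x_traj (a b gamma : R) (w v : nat -> R) (x0 : R) (t : nat) : R :=
  cl_x (cl_traj a b gamma (Pval a gamma) w v x0 t).

From Stdlib Require Import Reals Lra Psatz.
Open Scope R_scope.

(* The observer whose sign matches the true b gives the storage function
   V = l_b - P (x - xhat_b)^2.  Completing the square with the Riccati equation
   for P (the resulting quadratic form has zero discriminant) shows
   V(t+1) >= V(t) + x(t)^2 - gamma^2 (v(t)^2 + w(t)^2), so the sum in the
   theorem is at most V(T+1) + x(T+1)^2 <= l_b + P/(P-1) xhat_b^2 at time T+1.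
   It remains to show that l_i + P/(P-1) xhat_i^2 <= 0 holds for both observers
   at all times.  The dead-beat control resets the trusted observer to 0, so one
   estimate is always 0; the other observer has the smaller cost, hence its cost
   lies below a convex combination of the two bounds -P/(P-1) z^2 + lincr(z, y)
   and lincr(0, y), where lincr(z, y) is the cost increment at estimate z.  The
   curvature and strong negativity conditions are exactly what makes a weight
   exist for which this combination dominates the new estimate's term (an
   S-procedure certificate). *)

Lemma quad_form_nonneg (alpha beta gamma x y : R) :
  0 < alpha -> beta^2 <= alpha * gamma ->
  0 <= alpha * x^2 + 2 * beta * x * y + gamma * y^2.
Proof.
  intros Halpha Hdisc.
  assert (Hsq : alpha * (alpha * x^2 + 2 * beta * x * y + gamma * y^2)
                = (alpha * x + beta * y)^2 + (alpha * gamma - beta^2) * y^2) by ring.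
  assert (0 <= (alpha * x + beta * y)^2 + (alpha * gamma - beta^2) * y^2).
  { apply Rplus_le_le_0_compat; [apply pow2_ge_0 |].
    apply Rmult_le_pos; [lra | apply pow2_ge_0]. }
  nra.
Qed.

Lemma S_procedure_certificate (G u r : R) :
  0 < G -> 0 < u -> 0 <= r -> 2 * r < u -> 2 * r * u <= G * (u - 2 * r) ->
  exists theta, 0 <= theta <= 1 /\
    forall w y, r^2 * (w + 2 * G * y)^2
                <= theta * G^2 * (w - u * y)^2 + (1 - theta) * G^2 * u^2 * y^2.
Proof.
  intros HG Hu Hr Hur Hneg.
  assert (Hu2 : 0 < u^2) by (apply pow_lt; lra).
  set (N := G * (u^2 - 4 * r^2) - 4 * r^2 * u).
  assert (HN_lo : 2 * r * u^2 <= N).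
  { assert (N - 2 * r * u^2 = (u + 2 * r) * (G * (u - 2 * r) - 2 * r * u))
      by (unfold N; ring).
    assert (0 <= (u + 2 * r) * (G * (u - 2 * r) - 2 * r * u))
      by (apply Rmult_le_pos; lra).
    lra. }
  (* [Y = theta * G] maximises the discriminant [Y N - Y^2 u^2 - r^2 u^2] below. *)
  set (Y := N / (2 * u^2)).
  assert (HY : 2 * u^2 * Y = N) by (unfold Y; field; lra).
  exists (Y / G). split.
  - split.
    + assert (0 <= N) by (assert (0 <= r * u^2) by (apply Rmult_le_pos; nra); lra).
      assert (0 <= Y)
        by (unfold Y, Rdiv; apply Rmult_le_pos; [lra | apply Rlt_le, Rinv_0_lt_compat; nra]).
      unfold Rdiv; apply Rmult_le_pos; [lra | apply Rlt_le, Rinv_0_lt_compat; lra].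
    + apply (Rmult_le_reg_r (2 * u^2 * G)); [apply Rmult_lt_0_compat; lra |].
      replace (Y / G * (2 * u^2 * G)) with N by (rewrite <- HY; field; lra).
      unfold N; nra.
  - intros w y.
    assert (Hdisc : (Y * u + 2 * r^2)^2 <= (u^2 - 4 * r^2) * (G * Y - r^2)).
    { assert (4 * u^2 * ((u^2 - 4 * r^2) * (G * Y - r^2) - (Y * u + 2 * r^2)^2)
              = 4 * u^2 * (Y * N - Y^2 * u^2 - r^2 * u^2)) by (unfold N; ring).
      assert (4 * u^2 * (Y * N - Y^2 * u^2 - r^2 * u^2)
              = (N - 2 * r * u^2) * (N + 2 * r * u^2)) by (rewrite <- HY; ring).
      assert (0 <= (N - 2 * r * u^2) * (N + 2 * r * u^2))
        by (apply Rmult_le_pos; nra).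
      nra. }
    assert (Hform := quad_form_nonneg (G^2 * (u^2 - 4 * r^2)) (- (G * (Y * u + 2 * r^2)))
                       (G * Y - r^2) y w).
    replace (Y / G * G^2) with (G * Y) by (field; lra).
    replace (1 - Y / G) with ((G - Y) / G) by (field; lra).
    assert (Hpos : 0 < G^2 * (u^2 - 4 * r^2)) by (apply Rmult_lt_0_compat; nra).
    assert (Hd : (- (G * (Y * u + 2 * r^2)))^2
                 <= G^2 * (u^2 - 4 * r^2) * (G * Y - r^2)) by nra.
    specialize (Hform Hpos Hd).
    replace ((G - Y) / G * G^2 * u^2 * y^2) with ((G - Y) * G * u^2 * y^2) by (field; lra).
    nra.
Qed.

Lemma Pval_riccati (a g : R) :
  1 < Pval a g -> g^2 * a^2 * Pval a g = (g^2 - Pval a g) * (Pval a g + g^2 - 1).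
Proof.
  unfold Pval.
  set (disc := g^2 * (-1 + g^2) + (g^2 * a^2 - 1)^2 / 4).
  intros HP.
  destruct (Rle_lt_dec 0 disc) as [Hdisc | Hdisc].
  - pose proof (pow2_sqrt disc Hdisc) as Hsqrt.
    set (q := sqrt disc) in *. unfold disc in Hsqrt. nra.
  - rewrite (sqrt_neg_0 disc (Rlt_le _ _ Hdisc)) in HP; nra.
Qed.

Lemma lincr_completed_square (g P z y : R) : 1 < P ->
  lincr g P z y
  = P / (P - 1) * z^2 - g^2 * (P * z - (P - 1) * y)^2 / ((P - 1) * (P + g^2 - 1)).
Proof.
  intros HP. assert (0 <= g^2) by apply pow2_ge_0.
  unfold lincr; field; lra.
Qed.

Lemma lincr_le_sq (g P z y : R) : 1 < P -> lincr g P z y <= P / (P - 1) * z^2.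
Proof.
  intros HP. rewrite lincr_completed_square by exact HP.
  assert (0 <= g^2) by apply pow2_ge_0.
  assert (0 <= g^2 * (P * z - (P - 1) * y)^2 / ((P - 1) * (P + g^2 - 1))).
  { unfold Rdiv; apply Rmult_le_pos.
    - apply Rmult_le_pos; [lra | apply pow2_ge_0].
    - apply Rlt_le, Rinv_0_lt_compat, Rmult_lt_0_compat; lra. }
  lra.
Qed.

Lemma sq_sub_mul_sq_le (P X Z : R) : 1 < P -> X^2 - P * (X - Z)^2 <= P / (P - 1) * Z^2.
Proof.
  intros HP.
  assert ((P - 1) * (P / (P - 1) * Z^2 - X^2 + P * (X - Z)^2) = ((P - 1) * X - P * Z)^2)
    by (field; lra).
  assert (0 <= ((P - 1) * X - P * Z)^2) by apply pow2_ge_0.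
  nra.
Qed.

Lemma curvature_gap (g P r : R) :
  0 < g -> 1 < P -> 0 <= r -> r^2 = g^2 - P -> P > 2 * g - 1 -> 2 * r < P - 1.
Proof.
  intros Hg HP Hr Hr2 Hcurv.
  assert (Hsq : (2 * r)^2 < (P - 1)^2).
  { assert (4 * g^2 < (P + 1)^2) by nra. nra. }
  nra.
Qed.

Lemma strong_negativity_reduced (g P r : R) :
  1 < P -> 0 <= r -> r^2 = g^2 - P -> 2 * r < P - 1 ->
  (P + 2 * g^2 - 1) * (P - 1 - 2 * r)^2 >= (P - 1) * ((P + 1)^2 - 4 * g^2) ->
  2 * r * (P - 1) <= g^2 * (P - 1 - 2 * r).
Proof.
  intros HP Hr Hr2 Hgap Hneg.
  set (d := P - 1 - 2 * r) in *.
  assert (Hd : 0 < d) by (unfold d; lra).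
  assert (Hfac : (P + 1)^2 - 4 * g^2 = d * (P - 1 + 2 * r)) by (unfold d; nra).
  rewrite Hfac in Hneg.
  assert (Hdiv : (P - 1) * (P - 1 + 2 * r) <= (P + 2 * g^2 - 1) * d)
    by (apply (Rmult_le_reg_r d); [exact Hd | nra]).
  unfold d in *; nra.
Qed.

Definition reset_invariant (P : R) (s : cl_state) : Prop :=
  (cl_xh1 s = 0 \/ cl_xhm1 s = 0) /\
  cl_l1 s + P / (P - 1) * cl_xh1 s ^ 2 <= 0 /\
  cl_lm1 s + P / (P - 1) * cl_xhm1 s ^ 2 <= 0.

Definition obs_xh (b : R) (s : cl_state) : R :=
  if Req_EM_T b 1 then cl_xh1 s else cl_xhm1 s.

Definition obs_l (b : R) (s : cl_state) : R :=
  if Req_EM_T b 1 then cl_l1 s else cl_lm1 s.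

Definition storage (P b : R) (s : cl_state) : R :=
  obs_l b s - P * (cl_x s - obs_xh b s)^2.

Lemma cl_step_obs (a b g P wt vt : R) (s : cl_state) : b = 1 \/ b = -1 ->
  obs_l b (cl_step a b g P wt vt s) = obs_l b s + lincr g P (obs_xh b s) (cl_x s + vt) /\
  cl_x (cl_step a b g P wt vt s) - obs_xh b (cl_step a b g P wt vt s)
  = a * cl_x s + wt - ahat a g P * obs_xh b s - ghat a g P * (cl_x s + vt).
Proof.
  intros [-> | ->]; unfold obs_l, obs_xh, cl_step; simpl;
    destruct (Req_EM_T _ 1); try lra; split; simpl; ring.
Qed.

Lemma storage_terminal (P b : R) (s : cl_state) :
  1 < P -> reset_invariant P s -> storage P b s + cl_x s ^ 2 <= 0.
Proof.
  intros HP [_ [H1 Hm]].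
  pose proof (sq_sub_mul_sq_le P (cl_x s) (obs_xh b s) HP).
  unfold storage, obs_l, obs_xh in *; destruct (Req_EM_T b 1); lra.
Qed.

Lemma sum_f_R0_telescope_le (V f : nat -> R) (n : nat) :
  (forall k, V k + f k <= V (S k)) -> V 0%nat + sum_f_R0 f n <= V (S n).
Proof.
  intros Hstep. induction n as [| n IH]; simpl.
  - apply Hstep.
  - specialize (Hstep (S n)). lra.
Qed.

Lemma sum_f_R0_sub_scal (f h j : nat -> R) (c : R) (n : nat) :
  sum_f_R0 (fun k => f k - c * h k - c * j k) n
  = sum_f_R0 f n - c * sum_f_R0 h n - c * sum_f_R0 j n.
Proof.
  induction n as [| n IH]; simpl; [| rewrite IH]; ring.
Qed.

Section Riccati.

Variables a g P : R.
Hypothesis g_pos : 0 < g.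
Hypothesis P_gt1 : 1 < P.
Hypothesis riccati : g^2 * a^2 * P = (g^2 - P) * (P + g^2 - 1).

Lemma P_le_sq : P <= g^2.
Proof.
  assert (0 <= g^2 * a^2 * P).
  { apply Rmult_le_pos; [apply Rmult_le_pos; apply pow2_ge_0 | lra]. }
  assert (0 < P + g^2 - 1) by (pose proof (pow2_ge_0 g); lra).
  nra.
Qed.

Lemma observer_dissipation (x xh w v : R) :
  x^2 - g^2 * v^2 - g^2 * w^2
  + P * (a * x + w - ahat a g P * xh - ghat a g P * (x + v))^2
  <= P * (x - xh)^2 + lincr g P xh (x + v).
Proof.
  unfold ahat, ghat, lincr.
  set (G := g^2) in *. set (D := P + G - 1).
  assert (HG : 0 < G) by (unfold G; nra).
  assert (HD : 0 < D) by (unfold D; lra).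
  set (e := x - (P * xh + G * (x + v)) / D).
  assert (Hdiff : P * (x - xh)^2 + (- P * xh^2 - G * (x + v)^2 + (P * xh + G * (x + v))^2 / D)
    - (x^2 - G * v^2 - G * w^2 + P * (a * x + w - a * P / D * xh - G * a / D * (x + v))^2)
    = (D - P * a^2) * e^2 + 2 * (- P * a) * e * w + (G - P) * w^2)
    by (unfold e, D; field; unfold D in HD; lra).
  (* The Riccati equation makes this form degenerate: its discriminant vanishes. *)
  assert (Halpha : G * (D - P * a^2) = P * D) by (unfold D; lra).
  assert (Hdisc : G * ((D - P * a^2) * (G - P) - (- P * a)^2) = 0)
    by (unfold D in *; nra).
  pose proof (quad_form_nonneg (D - P * a^2) (- P * a) (G - P) e w) as Hform.
  assert (0 < D - P * a^2) by nra.
  assert ((- P * a)^2 <= (D - P * a^2) * (G - P)) by nra.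
  fold D; lra.
Qed.

Lemma storage_step (b wt vt : R) (s : cl_state) : b = 1 \/ b = -1 ->
  storage P b s + (cl_x s ^ 2 - g^2 * vt^2 - g^2 * wt^2)
  <= storage P b (cl_step a b g P wt vt s).
Proof.
  intros Hb. unfold storage.
  destruct (cl_step_obs a b g P wt vt s Hb) as [-> ->].
  pose proof (observer_dissipation (cl_x s) (obs_xh b s) wt vt).
  lra.
Qed.

Variable r : R.
Hypothesis r_nonneg : 0 <= r.
Hypothesis r_sq : r^2 = g^2 - P.
Hypothesis gap : 2 * r < P - 1.
Hypothesis negativity : 2 * r * (P - 1) <= g^2 * (P - 1 - 2 * r).

Lemma switched_cost_bound (z y m : R) :
  m <= - (P / (P - 1)) * z^2 + lincr g P z y -> m <= lincr g P 0 y ->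
  m + P / (P - 1) * (ahat a g P * z + 2 * ghat a g P * y)^2 <= 0.
Proof.
  intros Hm1 Hm2.
  rewrite lincr_completed_square in Hm1, Hm2 by exact P_gt1.
  unfold ahat, ghat.
  set (G := g^2) in *. set (u := P - 1) in *. set (D := P + G - 1) in *.
  assert (HG : 0 < G) by (unfold G; nra).
  assert (Hu : 0 < u) by (unfold u; lra).
  assert (HD : 0 < D) by (unfold D; lra).
  set (K := / (u * G * D)).
  assert (HK : 0 < K) by (apply Rinv_0_lt_compat, Rmult_lt_0_compat; [nra | lra]).
  assert (HA : - (P / u) * z^2 + (P / u * z^2 - G * (P * z - u * y)^2 / (u * D))
               = - (K * (G^2 * (P * z - u * y)^2))) by (unfold K; field; lra).
  assert (HB : P / u * 0^2 - G * (P * 0 - u * y)^2 / (u * D) = - (K * (G^2 * u^2 * y^2)))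
    by (unfold K; field; lra).
  assert (HPa : G * (P * a^2) = r^2 * D) by (rewrite r_sq, <- riccati; ring).
  assert (HC : P / u * (a * P / D * z + 2 * (G * a / D) * y)^2
               = K * (r^2 * (P * z + 2 * G * y)^2)).
  { assert (0 < G * u * D^2)
      by (apply Rmult_lt_0_compat; [apply Rmult_lt_0_compat | apply pow_lt]; lra).
    unfold K. apply (Rmult_eq_reg_l (G * u * D^2)); [| lra].
    transitivity (G * (P * a^2) * (P * z + 2 * G * y)^2); [field; lra |].
    rewrite HPa. field. lra. }
  rewrite HA in Hm1. rewrite HB in Hm2. rewrite HC.
  destruct (S_procedure_certificate G u r HG Hu r_nonneg gap negativity)
    as [theta [[Htheta0 Htheta1] Hcert]].
  specialize (Hcert (P * z) y).
  apply (Rmult_le_compat_l K) in Hcert; [| lra].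
  nra.
Qed.

Lemma reset_invariant_step (b wt vt : R) (s : cl_state) :
  reset_invariant P s -> reset_invariant P (cl_step a b g P wt vt s).
Proof.
  destruct s as [x x1 xm l1 lm]; unfold reset_invariant, cl_step, control; simpl.
  intros [Hzero [H1 Hm]].
  set (y := x + vt).
  pose proof (lincr_le_sq g P x1 y P_gt1).
  pose proof (lincr_le_sq g P xm y P_gt1).
  (* Whatever the control, the next two estimates add up to [z'] and the trusted one is 0. *)
  set (z' := ahat a g P * (x1 + xm) + 2 * ghat a g P * y).
  assert (Hmin : forall m, m <= l1 + lincr g P x1 y -> m <= lm + lincr g P xm y ->
                   m + P / (P - 1) * z' ^ 2 <= 0).
  { intros m Hm1 Hm2. unfold z'.
    destruct Hzero as [-> | ->]; [rewrite Rplus_0_l | rewrite Rplus_0_r];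
      apply switched_cost_bound; nra. }
  destruct (Rle_dec (lm + lincr g P xm y) (l1 + lincr g P x1 y)) as [Hle | Hlt].
  - replace (ahat a g P * x1 + 1 * - (ahat a g P * x1 + ghat a g P * y) + ghat a g P * y)
      with 0 by ring.
    replace (ahat a g P * xm + -1 * - (ahat a g P * x1 + ghat a g P * y) + ghat a g P * y)
      with z' by (unfold z'; ring).
    split; [left; reflexivity | split; [nra | apply Hmin; lra]].
  - replace (ahat a g P * xm + -1 * (ahat a g P * xm + ghat a g P * y) + ghat a g P * y)
      with 0 by ring.
    replace (ahat a g P * x1 + 1 * (ahat a g P * xm + ghat a g P * y) + ghat a g P * y)
      with z' by (unfold z'; ring).
    split; [right; reflexivity | split; [apply Hmin; lra | nra]].
Qed.

Lemma cl_traj_reset_invariant (b : R) (w v : nat -> R) (x0 : R) (n : nat) :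
  reset_invariant P (cl_traj a b g P w v x0 n).
Proof.
  induction n as [| n IH]; simpl.
  - unfold reset_invariant; simpl. split; [left; reflexivity | split; nra].
  - apply reset_invariant_step, IH.
Qed.

End Riccati.

Theorem theorem6 (a gamma : R) :
  0 < gamma ->
  Pval a gamma > 1 ->
  Pval a gamma > 2 * gamma - 1 ->
  (Pval a gamma + 2 * gamma^2 - 1)
    * (Pval a gamma - 1 - 2 * sqrt (gamma^2 - Pval a gamma))^2
  >= (Pval a gamma - 1) * ((Pval a gamma + 1)^2 - 4 * gamma^2) ->
  forall (b : R), (b = 1 \/ b = -1) ->
  forall (T : nat) (w v : nat -> R) (x0 : R),
    sum_f_R0 (fun k => (cl_x_traj a b gamma w v x0 k)^2) (S T)
    - gamma^2 * sum_f_R0 (fun k => (w k)^2) T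
    - gamma^2 * sum_f_R0 (fun k => (v k)^2) (S T)
    - Pval a gamma * (cl_x_traj a b gamma w v x0 0)^2 <= 0.
Proof.
  intros g_pos P_gt1 curvature negativity b Hb T w v x0.
  pose proof (Pval_riccati a gamma P_gt1) as riccati.
  unfold cl_x_traj. set (P := Pval a gamma) in *.
  pose proof (P_le_sq a gamma P P_gt1 riccati).
  set (r := sqrt (gamma^2 - P)) in *.
  assert (r_sq : r^2 = gamma^2 - P) by (apply pow2_sqrt; lra).
  assert (r_nonneg : 0 <= r) by apply sqrt_pos.
  assert (gap := curvature_gap gamma P r g_pos P_gt1 r_nonneg r_sq curvature).
  assert (neg := strong_negativity_reduced gamma P r P_gt1 r_nonneg r_sq gap negativity).
  set (traj := cl_traj a b gamma P w v x0).
  assert (Hdiss := sum_f_R0_telescope_le (fun n => storage P b (traj n))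
    (fun k => cl_x (traj k) ^ 2 - gamma^2 * v k ^ 2 - gamma^2 * w k ^ 2) T
    (fun k => storage_step a gamma P g_pos P_gt1 riccati b (w k) (v k) (traj k) Hb)).
  assert (Hend := storage_terminal P b (traj (S T)) P_gt1
    (cl_traj_reset_invariant a gamma P g_pos P_gt1 riccati r r_nonneg r_sq gap neg
       b w v x0 (S T))).
  assert (Hinit : storage P b (traj 0%nat) = - P * cl_x (traj 0%nat) ^ 2)
    by (unfold storage, obs_l, obs_xh; simpl; destruct (Req_EM_T b 1); ring).
  assert (0 <= gamma^2 * v (S T) ^ 2) by (apply Rmult_le_pos; apply pow2_ge_0).
  cbv beta in Hdiss. rewrite sum_f_R0_sub_scal, Hinit in Hdiss. rewrite !tech5.
  fold traj. lra.
Qed.
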